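(* Let $k\geq 1$ be an integer and let $\mathcal{B}$ be a Boolean algebra with $2^{k+1}$ elements, viewed as an MV-algebra $(\mathcal{B},\oplus,\lceil,0)$ with $x\oplus y=x\vee y$ and greatest element $\varepsilon$. Define matrices $M_{2^m}\in\mathcal{M}_{2^m}(\{0,1\})$ recursively by $M_2=\begin{pmatrix}0&1\\1&1\end{pmatrix}$ and $M_{2^{m+1}}=\begin{pmatrix}\mathbf{0}_{2^m}&M_{2^m}\\ M_{2^m}&M_{2^m}\end{pmatrix}$, where $\mathbf{0}_{2^m}$ is the $2^m\times 2^m$ zero matrix, and let $C_{2^{k+1}}$ be the binary block code whose codewords are the rows of $M_{2^{k+1}}$. Then: (1) the elements of $\mathcal{B}$ can be enumerated as $\alpha_0,\alpha_1,\dots,\alpha_{2^{k+1}-1}$ so that the binary block code attached to $\mathcal{B}$ (with respect to this enumeration) has attached matrix equal to $M_{2^{k+1}}$; (2) there is a binary operation $*$ on $C_{2^{k+1}}$ such that $(C_{2^{k+1}},* )$ is a Boolean algebra isomorphic to $\mathcal{B}$ (i.e. there is a bijection $f:C_{2^{k+1}}\to\mathcal{B}$ with $f(w*w')=f(w)\oplus f(w')$ for all codewords $w,w'$).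
   Context: For a finite MV-algebra $X=\{\alpha_0,\alpha_1,\dots,\alpha_{n-1}\}$ of order $n$ with greatest element $\varepsilon=\lceil 0$, the binary block code attached to $X$ consists of $n$ codewords $w_0,\dots,w_{n-1}$ of length $n$, where $w_j=i_0i_1\cdots i_{n-1}$ with $i_s=1$ if $\alpha_j\oplus\alpha_s=\varepsilon$ and $i_s=0$ otherwise. The matrix attached to the code is the $n\times n$ $0/1$ matrix whose $j$-th row is $w_j$. A Boolean algebra is an MV-algebra in which $x\oplus x=x$ for all $x$; in it $x\oplus y=x\vee y$. *)

From HB Require Import structures.
From mathcomp Require Import all_boot all_order all_algebra.
Set Implicit Arguments. Unset Strict Implicit. Unset Printing Implicit Defensive.
Import Order.TTheory.
Local Open Scope order_scope.

(* A Boolean algebra is modelled as a finite complemented distributive lattice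
   (finCTBDistrLatticeType); viewed as an MV-algebra:
   x (+) y := x `|` y, lceil x := ~` x, 0 := \bot, epsilon := \top. *)

Definition mv_oplus d (B : finCTBDistrLatticeType d) (x y : B) : B := x `|` y.
Definition mv_eps d (B : finCTBDistrLatticeType d) : B := \top.

Definition code_matrix d (B : finCTBDistrLatticeType d) n (alpha : 'I_n -> B)
  : 'M[bool]_n :=
  \matrix_(j < n, s < n) (mv_oplus (alpha j) (alpha s) == mv_eps B).

(* Entries of M_{2^(m+1)}: block recursion
   M_2 = [[0,1],[1,1]],  M_{2^(m+2)} = [[0, M],[M, M]] with blocks of size 2^(m+1). *)
Fixpoint Mentry (m : nat) (i j : nat) : bool :=
  match m with
  | 0 => (i == 1)%N || (j == 1)%N
  | m'.+1 =>
      let h := (2 ^ m'.+1)%N in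
      if (i < h)%N then
        (if (j < h)%N then false else Mentry m' i (j - h))
      else
        (if (j < h)%N then Mentry m' (i - h) j else Mentry m' (i - h) (j - h))
  end.

Definition Mmat (m : nat) : 'M[bool]_(2 ^ m.+1) :=
  \matrix_(i < 2 ^ m.+1, j < 2 ^ m.+1) Mentry m i j.

Definition is_codeword (m : nat) (w : 'rV[bool]_(2 ^ m.+1)) : bool :=
  [exists i : 'I_(2 ^ m.+1), w == row i (Mmat m)].

Definition code (m : nat) := {w : 'rV[bool]_(2 ^ m.+1) | @is_codeword m w}.

From HB Require Import structures.
From mathcomp Require Import all_boot all_order all_algebra.
Set Implicit Arguments. Unset Strict Implicit. Unset Printing Implicit Defensive.
Import Order.Theory.

(* A finite Boolean algebra is the powerset of its atoms, so B is the powerset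
   of a (k+1)-set.  Let alpha_i be the subset given by the binary digits of i:
   then alpha_i (+) alpha_j = epsilon iff the digits of i and j together cover
   every position, and this relation obeys the block recursion of M (the top
   digit selects the block, the lower digits the entry inside it).  Row i
   determines alpha_i, since alpha_i <= x iff x (+) lceil alpha_i = epsilon; so
   the codewords are in bijection with B, and * is transported along it. *)

Section BooleanAtoms.
Local Open Scope order_scope.
Variables (d : Order.disp_t) (B : finCTBDistrLatticeType d).
Implicit Types a b x y : B.

Definition atom a := (a != \bot) && [forall b, (b <= a) ==> (b == \bot) || (b == a)].

Lemma exists_atom_le x : x != \bot -> exists2 a, atom a & a <= x.
Proof.
move=> x0; pose down b := #|[set c : B | c <= b]|.
pose P b := (b != \bot) && (b <= x).
have Px : P x by rewrite /P x0 lexx.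
have [a /andP[a0 ax] a_min] := @arg_minnP _ x P down Px.
exists a => //; apply/andP; split=> //; apply/forallP => b; apply/implyP => ba.
apply/norP => -[b0 nba]; have Pb : P b by rewrite /P b0 (le_trans ba ax).
move: (a_min b Pb); apply/negP; rewrite -ltnNge.
apply: proper_card; apply/properP; split.
  by apply/subsetP => c; rewrite !inE => /le_trans; apply.
exists a; rewrite !inE ?lexx //; apply: contra nba => ab.
by rewrite eq_le ba ab.
Qed.

Lemma atom_le_eq a b : atom a -> atom b -> a <= b -> a = b.
Proof.
move=> /andP[a0 _] /andP[_ /forallP b_min] ab.
have /implyP/(_ ab)/orP[/eqP a0'|/eqP //] := b_min a.
by rewrite a0' eqxx in a0.
Qed.

Lemma atom_le_joins (I : finType) (P : {pred I}) (F : I -> B) a : atom a ->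
  (a <= \join_(i | P i) F i) = [exists i, P i && (a <= F i)].
Proof.
move=> /andP[a0 /forallP a_min]; apply/idP/existsP => [aF|[i /andP[Pi aFi]]].
  apply/existsP; apply: contraNT a0 => /existsPn none.
  rewrite -(meet_l aF) joins_disjoint // => i Pi.
  have /implyP/(_ (leIl a (F i)))/orP[/eqP //|/eqP aFa] := a_min (a `&` F i).
  by have := none i; rewrite Pi -{1}aFa leIr.
exact: le_trans aFi (joins_sup F Pi).
Qed.

Lemma le_of_atoms x y : (forall a, atom a -> a <= x -> a <= y) -> x <= y.
Proof.
move=> sub; rewrite -diff_eq0; apply/negPn/negP => /exists_atom_le[a at_a a_xy].
have : a <= y `&` (x `\` y) by rewrite lexI a_xy sub // (le_trans a_xy (leBx x y)).
by rewrite diffKI lex0 => /eqP a0; move: at_a; rewrite /atom a0 eqxx.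
Qed.

Lemma powerset_join_iso : exists n (phi : {set 'I_n} -> B),
  bijective phi /\ {morph phi : S T / S :|: T >-> S `|` T}.
Proof.
pose A := [set a : B | atom a]; pose e : 'I_#|A| -> B := enum_val.
have e_atom i : atom (e i) by have := enum_valP i; rewrite inE.
have e_onto a : atom a -> exists i, e i = a.
  move=> at_a; have Aa : a \in A by rewrite inE.
  by exists (enum_rank_in Aa a); rewrite /e enum_rankK_in.
exists #|A|, (fun S : {set 'I_#|A|} => \join_(i in S) e i).
split; last by move=> S T; exact: joins_setU.
exists (fun x => [set i | e i <= x]) => [S|x].
  apply/setP => i; rewrite inE atom_le_joins //.
  apply/existsP/idP => [[j /andP[jS /(atom_le_eq (e_atom i) (e_atom j))]]|iS].
    by move/enum_val_inj->.
  by exists i; rewrite iS lexx.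
apply/le_anti/andP; split; first by apply/joinsP => i; rewrite inE.
apply: le_of_atoms => a at_a ax; have [i ei] := e_onto a at_a.
by rewrite -ei; apply: joins_sup; rewrite inE ei.
Qed.

Lemma join_top_ext x y : (forall z, (x `|` z == \top) = (y `|` z == \top)) -> x = y.
Proof.
suff le_top x' y' : y' `|` ~` x' = \top -> x' <= y'.
  move=> xy; apply/le_anti/andP; split; apply: le_top; apply/eqP.
    by rewrite -xy joinxC.
  by rewrite xy joinxC.
move=> top_eq; have : x' `&` (y' `|` ~` x') = x' `&` y'.
  by rewrite meetUr meetxC joinx0.
by rewrite top_eq meetx1 => ->; apply: leIr.
Qed.

Lemma code_matrix_row_inj n (alpha : 'I_n -> B) : bijective alpha ->
  injective (fun i => row i (code_matrix alpha)).
Proof.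
move=> alpha_bij i j /= eq_row; have [beta _ betaK] := alpha_bij.
apply: (bij_inj alpha_bij); apply: join_top_ext => z.
by have := congr1 (fun r : 'rV_n => r ord0 (beta z)) eq_row; rewrite !mxE betaK.
Qed.

Lemma code_matrix_powerset (I : finType) n (phi : {set I} -> B)
    (X : 'I_n -> {set I}) :
  bijective phi -> {morph phi : S T / S :|: T >-> S `|` T} ->
  code_matrix (phi \o X) = (\matrix_(i < n, j < n) (X i :|: X j == setT))%R.
Proof.
move=> phi_bij phiU; have [psi _ psiK] := phi_bij.
have phiT : phi setT = \top by rewrite -(setUT (psi \top)) phiU psiK join1x.
apply/matrixP => i j; rewrite !mxE /mv_oplus /mv_eps /= -phiU -phiT.
by rewrite (inj_eq (bij_inj phi_bij)).
Qed.

End BooleanAtoms.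

Definition bit (i l : nat) : bool := odd (i %/ 2 ^ l).

Definition bits n i : {set 'I_n} := [set l : 'I_n | bit i l].

Lemma bit_modn n i l : l < n -> bit (i %% 2 ^ n) l = bit i l.
Proof.
move=> lt_ln; have le_ln := ltnW lt_ln.
rewrite /bit divn_modl ?dvdn_exp2l // -expnB // odd_mod // oddX.
by rewrite subn_eq0 leqNgt lt_ln.
Qed.

Lemma bit_top n i : i < 2 ^ n.+1 -> bit i n = (2 ^ n <= i).
Proof.
move=> lt_i; rewrite /bit -divn_gt0 ?expn_gt0 //.
have : i %/ 2 ^ n < 2 by rewrite ltn_divLR ?expn_gt0 // -expnS.
by case: (i %/ 2 ^ n) => [|[]].
Qed.

Lemma eq_from_bit n i j : i < 2 ^ n -> j < 2 ^ n ->
  (forall l, l < n -> bit i l = bit j l) -> i = j.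
Proof.
elim: n i j => [|n IH] i j lt_i lt_j eq_ij.
  by move: lt_i lt_j; rewrite !ltnS !leqn0 => /eqP-> /eqP->.
rewrite -(odd_double_half i) -(odd_double_half j) -!divn2.
have := eq_ij 0 isT; rewrite /bit expn0 !divn1 => ->.
congr (_ + _.*2); apply: IH => [||l lt_l]; rewrite ?ltn_divLR // -?expnSr //.
by have := eq_ij l.+1 lt_l; rewrite /bit expnS !divnMA.
Qed.

Lemma bits_inj n : injective (fun i : 'I_(2 ^ n) => bits n i).
Proof.
move=> i j /setP eq_ij; apply/val_inj/(@eq_from_bit n) => [||l lt_l]; rewrite ?ltn_ord //.
by have := eq_ij (Ordinal lt_l); rewrite !inE.
Qed.

Lemma Mentry_rec m i j : i < 2 ^ m.+2 -> j < 2 ^ m.+2 ->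
  Mentry m.+1 i j =
  ((2 ^ m.+1 <= i) || (2 ^ m.+1 <= j)) && Mentry m (i %% 2 ^ m.+1) (j %% 2 ^ m.+1).
Proof.
have mod_hi x : 2 ^ m.+1 <= x -> x < 2 ^ m.+2 -> x %% 2 ^ m.+1 = x - 2 ^ m.+1.
  move=> le_x lt_x; rewrite -{1}(subnKC le_x) modnDl modn_small //.
  by rewrite ltn_subLR // addnn -mul2n -expnS.
move=> lt_i lt_j /=; case: (ltnP i (2 ^ m.+1)) => hi; case: (ltnP j (2 ^ m.+1)) => hj;
  by rewrite ?(modn_small hi) ?(modn_small hj) ?(mod_hi i) ?(mod_hi j).
Qed.

Lemma Mentry_covers m i j : i < 2 ^ m.+1 -> j < 2 ^ m.+1 ->
  Mentry m i j = all (fun l => bit i l || bit j l) (iota 0 m.+1).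
Proof.
elim: m i j => [|m IH] i j lt_i lt_j.
  by move: lt_i lt_j; rewrite /bit /= !divn1 andbT; case: i => [|[|]]; case: j => [|[|]].
rewrite Mentry_rec // IH ?ltn_pmod ?expn_gt0 // -[m.+2]addn1 iotaD all_cat andbC.
congr (_ && _); last by rewrite /= andbT !bit_top.
apply: eq_in_all => l; rewrite mem_iota add0n => lt_l.
by rewrite !bit_modn.
Qed.

Lemma Mentry_bits m (i j : 'I_(2 ^ m.+1)) :
  Mentry m i j = (bits m.+1 i :|: bits m.+1 j == setT).
Proof.
rewrite Mentry_covers //; apply/allP/eqP => [cover|cover l].
  by apply/setP => l; rewrite !inE; apply: cover; rewrite mem_iota ltn_ord.
rewrite mem_iota add0n => lt_l.
by have := congr1 (fun S : {set _} => Ordinal lt_l \in S) cover; rewrite /= !inE.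
Qed.

Lemma row_is_codeword m (i : 'I_(2 ^ m.+1)) : is_codeword (row i (Mmat m)).
Proof. by apply/existsP; exists i. Qed.

Definition codeword m (i : 'I_(2 ^ m.+1)) : code m :=
  exist (@is_codeword m) _ (row_is_codeword i).

Lemma codeword_bij m : injective (fun i => row i (Mmat m)) -> bijective (@codeword m).
Proof.
move=> row_inj; pose index (w : code m) := xchoose (existsP (valP w)).
have indexK : cancel index (@codeword m).
  by move=> w; apply/val_inj/esym/eqP; exact: xchooseP (existsP (valP w)).
exists index => //; apply: inj_can_sym indexK _.
by move=> i j /(congr1 val)/row_inj.
Qed.

Unset Implicit Arguments.

Theorem theorem4p4 (d : Order.disp_t) (B : finCTBDistrLatticeType d) (k : nat)
  (hk : (1 <= k)%N) (hcard : #|B| = (2 ^ k.+1)%N) :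
  (exists alpha : 'I_(2 ^ k.+1) -> B,
      bijective alpha /\ code_matrix alpha = Mmat k) /\
  (exists (star : code k -> code k -> code k) (f : code k -> B),
      bijective f /\ forall w w' : code k, f (star w w') = mv_oplus (f w) (f w')).
Proof.
(* [hk] is not needed: the case k = 0, the two-element algebra, works as well. *)
have [n [phi [phi_bij phiU]]] := powerset_join_iso B.
have n_eq : n = k.+1.
  apply: (@expnI 2) => //; rewrite -hcard -(bij_eq_card phi_bij).
  by rewrite -cardsT -powersetT card_powerset cardsT card_ord.
subst n; pose alpha := phi \o (fun i : 'I_(2 ^ k.+1) => bits k.+1 i).
have alpha_bij : bijective alpha.
  apply: inj_card_bij; first exact: inj_comp (bij_inj phi_bij) (@bits_inj _).
  by rewrite hcard card_ord.
have alphaM : code_matrix alpha = Mmat k.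
  by rewrite code_matrix_powerset //; apply/matrixP => i j; rewrite !mxE Mentry_bits.
split; first by exists alpha.
have row_inj := code_matrix_row_inj alpha_bij; rewrite alphaM in row_inj.
have [index codewordK indexK] := codeword_bij row_inj.
have [g fK gK] := bij_comp alpha_bij (Bijective indexK codewordK).
exists (fun w w' => g (mv_oplus (alpha (index w)) (alpha (index w')))), (alpha \o index).
by split=> [|w w']; [exact: Bijective fK gK | exact: gK].
Qed.
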